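(* Let $\bar{\mathcal{A}}=(\bar A_1,\dots,\bar A_4)$ be a quadruple of $5\times5$ alternating complex matrices, and suppose the scheme $\bar C\subset\mathbb{P}^3$ cut out by the five $4\times4$ principal sub-Pfaffians of $\bar{\mathcal{A}}(\mathbf{x})=\sum_k\bar A_kx_k$ has a positive-dimensional Zariski tangent space at some point $\bar p$. Then there exist $\bar\gamma\in U_4(\mathbb{C})\times U_5(\mathbb{C})$, an integer $1\le K\le4$ and distinct integers $1\le I,J,L\le5$ such that $\bar{\mathcal{B}}=\bar\gamma(\bar{\mathcal{A}})$ satisfies either (A) $\bar B_K=0$; or (B) $\bar B_k\neq0$ for all $k$, the entries $\bar b^{(K)}_{iI},\bar b^{(K)}_{iJ},\bar b^{(K)}_{iL}$ vanish for all $1\le i\le5$, and either (i) $\bar{\mathcal{B}}(\mathbf{x})_{IL}=\bar{\mathcal{B}}(\mathbf{x})_{JL}=0$, or (ii) $\bar{\mathcal{B}}(\mathbf{x})_{IJ}=0$ and the linear forms $\bar{\mathcal{B}}(\mathbf{x})_{IL}$ and $\bar{\mathcal{B}}(\mathbf{x})_{JL}$ are linearly independent.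
   Context: $U_n\subset\mathrm{GL}_n$ is the subgroup of lower triangular unipotent matrices. A pair $(g_4,g_5)\in U_4(\mathbb{C})\times U_5(\mathbb{C})$ acts on quadruples of alternating matrices by $(A_1,\dots,A_4)^t\mapsto g_4(A_1,\dots,A_4)^t$ (i.e. $A_k\mapsto\sum_l(g_4)_{kl}A_l$) and $A_k\mapsto g_5A_kg_5^t$. For a quadruple $\mathcal{B}=(B_1,\dots,B_4)$, $b^{(k)}_{ij}$ denotes the $(i,j)$ entry of $B_k$, and $\mathcal{B}(\mathbf{x})_{ij}=\sum_kb^{(k)}_{ij}x_k$ is the linear form in the $(i,j)$ entry of $\mathcal{B}(\mathbf{x})=\sum_kB_kx_k$. *)

From HB Require Import structures.
From mathcomp Require Import all_boot all_order all_algebra.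
From mathcomp Require Import complex.
From mathcomp Require Import reals.
From mathcomp Require Import mpoly.
Set Implicit Arguments. Unset Strict Implicit. Unset Printing Implicit Defensive.
Import Order.TTheory GRing.Theory Num.Theory.
Local Open Scope ring_scope.

Definition quad (F : Type) := 'I_4 -> 'M[F]_5.

Definition alternating (F : nzRingType) (M : 'M[F]_5) :=
  (forall i, M i i = 0) /\ M^T = - M.

(* lower triangular unipotent matrices U_n *)
Definition unipotent_lower (F : nzRingType) (n : nat) (g : 'M[F]_n) :=
  (forall i j : 'I_n, (i < j)%N -> g i j = 0) /\ (forall i : 'I_n, g i i = 1).

Definition act (F : comNzRingType) (g4 : 'M[F]_4) (g5 : 'M[F]_5) (A : quad F) : quad F :=
  fun k => g5 *m (\sum_l g4 k l *: A l) *m g5^T.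

Definition linform (F : comNzRingType) (A : quad F) (i j : 'I_5) : {mpoly F[4]} :=
  \sum_k (A k i j) *: 'X_k.

Definition pf4 (F : comNzRingType) (A : quad F) (a b c d : 'I_5) : {mpoly F[4]} :=
  linform A a b * linform A c d - linform A a c * linform A b d
  + linform A a d * linform A b c.

Definition subpf (F : comNzRingType) (A : quad F) (i : 'I_5) : {mpoly F[4]} :=
  pf4 A (lift i (0 : 'I_4)) (lift i (1 : 'I_4)) (lift i (2 : 'I_4)) (lift i (3 : 'I_4)).

Definition jac (F : comNzRingType) (A : quad F) (p : 'I_4 -> F) : 'M[F]_(5, 4) :=
  \matrix_(i < 5, k < 4) (mderiv k (subpf A i)).@[p].

(* p (a nonzero vector, representing a point of P^3) lies on the scheme C *)
Definition on_scheme (F : comNzRingType) (A : quad F) (p : 'I_4 -> F) :=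
  (exists k, p k != 0) /\ (forall i, (subpf A i).@[p] = 0).

(* dimension of the Zariski tangent space of the projective scheme at [p]:
   dim ker J(p) - 1, the affine-cone tangent space modulo the line through p *)
Definition tangent_dim (F : fieldType) (A : quad F) (p : 'I_4 -> F) : nat :=
  (4 - \rank (jac A p)).-1.

From HB Require Import structures.
From mathcomp Require Import all_boot all_order all_algebra.
From mathcomp Require Import complex reals mpoly.
From mathcomp Require Import ring zify.
From Stdlib Require Import Classical.
Set Implicit Arguments. Unset Strict Implicit. Unset Printing Implicit Defensive.
Import Order.TTheory GRing.Theory Num.Theory.
Local Open Scope ring_scope.

(* At a point [p] of the scheme the pencil [M = A(p)] is alternating with
   vanishing 4x4 sub-Pfaffians, hence of rank 0 or 2 (Pluecker relations).
   Taking for row [K] of [g4] the vector [p / p_K], [K] the last nonzero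
   coordinate of [p], makes [B_K] proportional to [M]; if [M = 0] this is
   case (A).  Otherwise two transvections bring [M] to [c (e_a /\ e_b)].  The
   Jacobian entries are the polarized sub-Pfaffians at [M], so a tangent
   direction [v] satisfies [A(v)_uw = 0] on the complement [{x, y, z}] of
   [{a, b}].  A positive-dimensional tangent space means [rank J <= 2], so the
   three linear forms [B_xy], [B_xz], [B_yz] satisfy a nontrivial linear
   relation.  A unipotent change of basis inside [{x, y, z}], which fixes
   [B_K], then makes two of them vanish, or one vanish and the other two
   independent: these are the alternatives (i) and (ii) of case (B). *)

(** * Sub-Pfaffians of 5x5 alternating arrays *)

Definition o0 : 'I_5 := @Ordinal 5 0 isT.
Definition o1 : 'I_5 := @Ordinal 5 1 isT.
Definition o2 : 'I_5 := @Ordinal 5 2 isT.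
Definition o3 : 'I_5 := @Ordinal 5 3 isT.
Definition o4 : 'I_5 := @Ordinal 5 4 isT.

Lemma ord5_ind (P : 'I_5 -> Prop) :
  P o0 -> P o1 -> P o2 -> P o3 -> P o4 -> forall i, P i.
Proof.
move=> P0 P1 P2 P3 P4 [[|[|[|[|[|//]]]]] lti];
by rewrite (bool_irrelevance lti isT).
Qed.

Lemma big_ord5 (V : nmodType) (G : 'I_5 -> V) :
  \sum_(i < 5) G i = G o0 + G o1 + G o2 + G o3 + G o4.
Proof.
rewrite !big_ord_recr big_ord0 /= add0r.
by congr (_ + _ + _ + _ + _); congr G; apply/val_inj.
Qed.

Lemma uniq4_extend (a b c d : 'I_5) :
  uniq [:: a; b; c; d] -> exists e, uniq [:: a; b; c; d; e].
Proof.
elim/ord5_ind: a; elim/ord5_ind: b; elim/ord5_ind: c; elim/ord5_ind: d => //=.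
all: first [by exists o0 | by exists o1 | by exists o2 | by exists o3 | by exists o4].
Qed.

Lemma complement3 (a b : 'I_5) : (a < b)%N ->
  exists x y z : 'I_5, [/\ (x < y)%N, (y < z)%N & uniq [:: a; b; x; y; z]].
Proof.
elim/ord5_ind: b; elim/ord5_ind: a => //= _.
all: first [by exists o0, o1, o2 | by exists o0, o1, o3 | by exists o0, o1, o4
  | by exists o0, o2, o3 | by exists o0, o2, o4 | by exists o0, o3, o4
  | by exists o1, o2, o3 | by exists o1, o2, o4 | by exists o1, o3, o4
  | by exists o2, o3, o4].
Qed.

Section Pfaffians.
Variable F : comNzRingType.
Implicit Types X M N : 'I_5 -> 'I_5 -> F.

Definition pfaff X (a b c d : 'I_5) := X a b * X c d - X a c * X b d + X a d * X b c.

(* The polarization of [pfaff], i.e. its derivative at [M] in the direction [N]. *)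
Definition pfaff_polar M N (a b c d : 'I_5) :=
  M a b * N c d + N a b * M c d - (M a c * N b d + N a c * M b d)
  + (M a d * N b c + N a d * M b c).

Definition subpfaff X (i : 'I_5) :=
  pfaff X (lift i 0) (lift i 1) (lift i 2) (lift i 3).

Definition subpfaff_polar M N (i : 'I_5) :=
  pfaff_polar M N (lift i 0) (lift i 1) (lift i 2) (lift i 3).

Lemma eq_pfaff X Y : X =2 Y -> forall a b c d, pfaff X a b c d = pfaff Y a b c d.
Proof. by move=> eXY a b c d; rewrite /pfaff !eXY. Qed.

Lemma eq_pfaff_polar M M' N N' : M =2 M' -> N =2 N' ->
  forall a b c d, pfaff_polar M N a b c d = pfaff_polar M' N' a b c d.
Proof. by move=> eM eN a b c d; rewrite /pfaff_polar !eM !eN. Qed.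

(* A skew-symmetric array given by its entries above the diagonal: once the
   indices are concrete numerals, [ring] only sees independent variables. *)
Definition skew_of (f : nat -> nat -> F) (i j : 'I_5) : F :=
  if (i < j)%N then f i j else if (j < i)%N then - f j i else 0.

Lemma subpfaff_skew_uniq (f : nat -> nat -> F) (a b c d e : 'I_5) :
  uniq [:: a; b; c; d; e] ->
  subpfaff (skew_of f) e = pfaff (skew_of f) a b c d \/
  subpfaff (skew_of f) e = - pfaff (skew_of f) a b c d.
Proof.
elim/ord5_ind: a; elim/ord5_ind: b; elim/ord5_ind: c; elim/ord5_ind: d.
all: elim/ord5_ind: e => //= _.
all: rewrite /subpfaff /pfaff /skew_of /=; first [left; ring | right; ring].
Qed.

Lemma subpfaff_polar_skew_uniq (f g : nat -> nat -> F) (a b c d e : 'I_5) :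
  uniq [:: a; b; c; d; e] ->
  subpfaff_polar (skew_of f) (skew_of g) e = pfaff_polar (skew_of f) (skew_of g) a b c d \/
  subpfaff_polar (skew_of f) (skew_of g) e = - pfaff_polar (skew_of f) (skew_of g) a b c d.
Proof.
elim/ord5_ind: a; elim/ord5_ind: b; elim/ord5_ind: c; elim/ord5_ind: d.
all: elim/ord5_ind: e => //= _.
all: rewrite /subpfaff_polar /pfaff_polar /skew_of /=; first [left; ring | right; ring].
Qed.

(* The entries of [T X T^T] for the transvection [T = 1 + c e_j^T] with [c j = 0]. *)
Definition transvect_fun (j : 'I_5) (c : 'I_5 -> F) X u v :=
  X u v + c u * X j v + c v * X u j.

Lemma subpfaff_polar_transvect (j k : 'I_5) (d : nat -> F) (f g : nat -> nat -> F) :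
  let c u := if u == j then 0 else d u in
  subpfaff_polar (transvect_fun j c (skew_of f)) (transvect_fun j c (skew_of g)) k =
  subpfaff_polar (skew_of f) (skew_of g) k +
  (k == j)%:R *
    \sum_(i < 5) (-1) ^+ (i + j).+1 * c i * subpfaff_polar (skew_of f) (skew_of g) i.
Proof.
rewrite /= big_ord5; elim/ord5_ind: j; elim/ord5_ind: k.
all: rewrite /subpfaff_polar /pfaff_polar /transvect_fun /skew_of /=; ring.
Qed.

End Pfaffians.

(** * Congruence by unipotent matrices *)

Section Congruence.
Variable F : comNzRingType.

Lemma alternatingP (X : 'M[F]_5) :
  (forall i, X i i = 0) -> (forall i j, X j i = - X i j) -> alternating X.
Proof. by move=> X0 Xsk; split=> //; apply/matrixP => i j; rewrite !mxE Xsk. Qed.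

Lemma alternating_skew (X : 'M[F]_5) : alternating X -> forall i j, X j i = - X i j.
Proof. by move=> [_ XT] i j; have /matrixP/(_ i j) := XT; rewrite !mxE. Qed.

Lemma alternating_skew_of (X : 'M[F]_5) :
  alternating X -> X =2 skew_of (fun i j => X (inord i) (inord j)).
Proof.
move=> hX i j; rewrite /skew_of; case: ltngtP => ij; rewrite ?inord_val //.
  by rewrite (alternating_skew hX j i).
by rewrite (val_inj ij) (proj1 hX).
Qed.

(* Writing [X = Y - Y^T] with [Y] strictly upper triangular avoids dividing by 2. *)
Lemma alternating_congr (g X : 'M[F]_5) : alternating X -> alternating (g *m X *m g^T).
Proof.
move=> hX; pose Y : 'M[F]_5 := \matrix_(i, j) if (i < j)%N then X i j else 0.
have -> : X = Y - Y^T.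
  apply/matrixP => i j; rewrite !mxE; case: ltngtP => ij.
  - by rewrite subr0.
  - by rewrite sub0r -alternating_skew.
  - by rewrite (val_inj ij) (proj1 hX) subr0.
set Z := g *m Y *m g^T.
have -> : g *m (Y - Y^T) *m g^T = Z - Z^T.
  by rewrite /Z !trmx_mul trmxK mulmxBr mulmxBl !mulmxA.
apply: alternatingP => [i|i j]; rewrite !mxE; first by rewrite subrr.
by rewrite opprB.
Qed.

Lemma pfaff_eq0 (X : 'M[F]_5) a b c d : alternating X ->
  (forall e, subpfaff X e = 0) -> uniq [:: a; b; c; d] -> pfaff X a b c d = 0.
Proof.
move=> hX X0 U; have [e Ue] := uniq4_extend U.
have eX := alternating_skew_of hX; set f := (fun i j => _) in eX.
rewrite (eq_pfaff eX).
have : subpfaff (skew_of f) e = 0 by rewrite -(X0 e); symmetry; exact: eq_pfaff.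
by case: (subpfaff_skew_uniq f Ue) => -> // /eqP; rewrite oppr_eq0 => /eqP.
Qed.

Lemma pfaff_polar_eq0 (M N : 'M[F]_5) a b c d : alternating M -> alternating N ->
  (forall e, subpfaff_polar M N e = 0) -> uniq [:: a; b; c; d] ->
  pfaff_polar M N a b c d = 0.
Proof.
move=> hM hN MN0 U; have [e Ue] := uniq4_extend U.
have eM := alternating_skew_of hM; set f := (fun i j => _) in eM.
have eN := alternating_skew_of hN; set g := (fun i j => _) in eN.
rewrite (eq_pfaff_polar eM eN).
have : subpfaff_polar (skew_of f) (skew_of g) e = 0.
  by rewrite -(MN0 e); symmetry; exact: eq_pfaff_polar.
by case: (subpfaff_polar_skew_uniq f g Ue) => -> // /eqP; rewrite oppr_eq0 => /eqP.
Qed.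

Definition transvection n (j : 'I_n) (c : 'I_n -> F) : 'M[F]_n :=
  \matrix_(u, v) ((u == v)%:R + (v == j)%:R * c u).

Lemma transvection_mulE n (j : 'I_n) (c : 'I_n -> F) u (G : 'I_n -> F) :
  \sum_v transvection j c u v * G v = G u + c u * G j.
Proof.
under eq_bigr => v _ do rewrite mxE mulrDl mulrAC.
rewrite big_split /= (bigD1 u) //= eqxx mul1r big1 ?addr0; last first.
  by move=> v; rewrite eq_sym => /negbTE ->; rewrite mul0r.
rewrite (bigD1 j) //= eqxx mul1r mulrC big1 ?addr0 // => v /negbTE ->.
by rewrite !mul0r.
Qed.

Lemma transvection_congrE n (j : 'I_n) (c : 'I_n -> F) (X : 'M[F]_n) u v :
  (transvection j c *m X *m (transvection j c)^T) u v =
  X u v + c u * X j v + c v * X u j + c u * c v * X j j.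
Proof.
rewrite mxE (eq_bigr (fun s => transvection j c v s * (X u s + c u * X j s))).
  by rewrite transvection_mulE; ring.
by move=> s _; rewrite mxE (transvection_mulE j c u (X^~ s)) [_^T _ _]mxE mulrC.
Qed.

Lemma unipotent_lower_mul n (P Q : 'M[F]_n) :
  unipotent_lower P -> unipotent_lower Q -> unipotent_lower (P *m Q).
Proof.
move=> [P0 P1] [Q0 Q1]; split=> [u v uv|u]; rewrite mxE.
  apply: big1 => k _; case: (ltnP u k) => uk; first by rewrite P0 ?mul0r.
  by rewrite Q0 ?mulr0 // (leq_ltn_trans uk uv).
rewrite (bigD1 u) //= P1 Q1 mulr1 big1 ?addr0 // => k ku.
case: (ltngtP u k) => uk; [by rewrite P0 ?mul0r | by rewrite Q0 ?mulr0 |].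
by rewrite (val_inj uk) eqxx in ku.
Qed.

Lemma transvection_lower n (j : 'I_n) (c : 'I_n -> F) :
  (forall i : 'I_n, (i <= j)%N -> c i = 0) -> unipotent_lower (transvection j c).
Proof.
move=> c0; split=> [u v uv|u]; rewrite mxE.
  rewrite (_ : (u == v) = false) ?add0r; last by apply/negbTE; rewrite neq_ltn uv.
  by case: eqP => [vj|]; rewrite ?mul0r // c0 ?mulr0 // -vj ltnW.
by rewrite eqxx; case: eqP => [->|_]; [rewrite c0 // mulr0 | rewrite mul0r]; rewrite addr0.
Qed.

Lemma congr_mulmx n (g h X : 'M[F]_n) :
  g *m h *m X *m (g *m h)^T = g *m (h *m X *m h^T) *m g^T.
Proof. by rewrite trmx_mul !mulmxA. Qed.

Definition polar_null (M N : 'M[F]_5) := forall e, subpfaff_polar M N e = 0.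

Definition polar_null_stable (g : 'M[F]_5) := forall M N : 'M[F]_5,
  alternating M -> alternating N -> polar_null M N ->
  polar_null (g *m M *m g^T) (g *m N *m g^T).

Lemma polar_null_stable_mul g h :
  polar_null_stable g -> polar_null_stable h -> polar_null_stable (g *m h).
Proof.
move=> sg sh M N hM hN MN0.
rewrite !congr_mulmx; apply: sg; try exact: alternating_congr.
exact: sh.
Qed.

Lemma polar_null_stable_transvection (j : 'I_5) (c : 'I_5 -> F) :
  c j = 0 -> polar_null_stable (transvection j c).
Proof.
move=> cj0 M N hM hN MN0 k.
pose d n : F := c (inord n).
have ec : c =1 fun u => if u == j then 0 else d u.
  by move=> u; case: eqP => [->|_]; rewrite // /d inord_val.
have eT X : alternating X -> transvection j c *m X *m (transvection j c)^T =2
    transvect_fun j (fun u => if u == j then 0 else d u)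
      (skew_of (fun i i' => X (inord i) (inord i'))).
  move=> hX u v; rewrite transvection_congrE (proj1 hX) mulr0 addr0 /transvect_fun.
  by rewrite -!ec -!(alternating_skew_of hX).
have eMN i : subpfaff_polar M N i =
    subpfaff_polar (skew_of (fun i i' => M (inord i) (inord i')))
                   (skew_of (fun i i' => N (inord i) (inord i'))) i.
  by apply: eq_pfaff_polar; apply: alternating_skew_of.
rewrite /subpfaff_polar (eq_pfaff_polar (eT _ hM) (eT _ hN)) -/(subpfaff_polar _ _ k).
rewrite subpfaff_polar_transvect -!eMN MN0 big1 ?mulr0 ?addr0 // => i _.
by rewrite -eMN MN0 mulr0.
Qed.

End Congruence.

(** * Alternating matrices of rank two *)

Lemma mx_neq0_entry (F : nmodType) m n (A : 'M[F]_(m, n)) :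
  A != 0 -> exists i j, A i j != 0.
Proof.
move=> A0; case: (pickP (fun p : 'I_m * 'I_n => A p.1 p.2 != 0)) => [[i j] Aij|A0'].
  by exists i, j.
by case/eqP: A0; apply/matrixP => i j; rewrite mxE; have /negbFE/eqP := A0' (i, j).
Qed.

Section RankTwo.
Variable F : fieldType.
Implicit Types M N : 'M[F]_5.

Definition wedge_mx n (a b : 'I_n) : 'M[F]_n := delta_mx a b - delta_mx b a.

Lemma wedge_mx_out (c : F) n (a b u v : 'I_n) : u \notin [:: a; b] ->
  (c *: wedge_mx a b) u v = 0 /\ (c *: wedge_mx a b) v u = 0.
Proof.
rewrite !inE negb_or => /andP[/negbTE ua /negbTE ub].
by rewrite !mxE ua ub !andbF subrr mulr0.
Qed.

Lemma alternating_wedge_mx (c : F) (a b : 'I_5) : alternating (c *: wedge_mx a b).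
Proof.
apply: alternatingP => [i|i j]; rewrite !mxE; first by rewrite andbC subrr mulr0.
by rewrite (andbC (j == a)) (andbC (j == b)); ring.
Qed.

Lemma pfaff_plucker M : alternating M -> (forall e, subpfaff M e = 0) ->
  forall a b x y, M a b * M x y = M a x * M b y - M a y * M b x.
Proof.
move=> hM M0 a b x y; have sk := alternating_skew hM; have [dg _] := hM.
case: (eqVneq a b) => [<-|ab]; first by rewrite dg; ring.
case: (eqVneq x y) => [<-|xy]; first by rewrite dg; ring.
case: (eqVneq a x) => [<-|ax]; first by rewrite dg (sk a b); ring.
case: (eqVneq a y) => [<-|ay]; first by rewrite dg (sk a b) (sk a x); ring.
case: (eqVneq b x) => [<-|bx]; first by rewrite dg; ring.
case: (eqVneq b y) => [<-|bY]; first by rewrite dg (sk b x); ring.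
have U : uniq [:: a; b; x; y] by rewrite /= !inE !negb_or ab ax ay bx bY xy.
have := pfaff_eq0 hM M0 U; rewrite /pfaff => pf0.
by apply/eqP; rewrite -subr_eq0 -pf0; apply/eqP; ring.
Qed.

Lemma rank2_factor M a b : alternating M -> (forall e, subpfaff M e = 0) ->
  M a b != 0 ->
  M = (M a b)^-1 *: ((row a M)^T *m row b M - (row b M)^T *m row a M).
Proof.
move=> hM M0 Mab; apply/matrixP => x y; rewrite !mxE !big_ord1 !mxE.
by apply: (mulfI Mab); rewrite mulrA mulfV // mul1r [in LHS](pfaff_plucker hM M0); ring.
Qed.

Lemma lex_first_nonzero M : alternating M -> M != 0 ->
  exists a b : 'I_5, [/\ (a < b)%N, M a b != 0,
    forall x : 'I_5, (x < a)%N -> forall y, M x y = 0 &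
    forall y : 'I_5, (y < b)%N -> M a y = 0].
Proof.
move=> hM /mx_neq0_entry[i0 [j0 Mij]].
have rowP0 x y : M x y != 0 -> row x M != 0.
  by apply: contra => /eqP/rowP/(_ y); rewrite !mxE => ->.
case: (@arg_minnP _ i0 (fun i => row i M != 0) val (rowP0 _ _ Mij)) => a Ma amin.
have [? [j1 Maj]] := mx_neq0_entry Ma; rewrite mxE in Maj.
case: (@arg_minnP _ j1 (fun j => M a j != 0) val Maj) => b Mab bmin.
exists a, b; split=> //.
- rewrite ltn_neqAle leqNgt; apply/andP; split.
    by apply: contraNneq Mab => /val_inj <-; rewrite (proj1 hM).
  have Mba : M b a != 0 by rewrite (alternating_skew hM) oppr_eq0.
  by apply/negP => ba; have := amin b (rowP0 _ _ Mba); rewrite leqNgt ba.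
- by move=> x xa y; apply/eqP; apply: contraTT xa => /rowP0/amin; rewrite -leqNgt.
- by move=> y yb; apply/eqP; apply: contraTT yb => /bmin; rewrite -leqNgt.
Qed.

Lemma transvection_tr_row n (j : 'I_n) (c : 'I_n -> F) (w : 'rV[F]_n) x :
  (w *m (transvection j c)^T) 0 x = w 0 x + c x * w 0 j.
Proof.
rewrite mxE -(transvection_mulE j c x (w 0)); apply: eq_bigr => v _.
by rewrite mxE mulrC.
Qed.

Lemma transvection_tr_fix n (j : 'I_n) (c : 'I_n -> F) (w : 'rV[F]_n) :
  w 0 j = 0 -> w *m (transvection j c)^T = w.
Proof. by move=> wj; apply/rowP => x; rewrite transvection_tr_row wj mulr0 addr0. Qed.

Lemma congr_outer m n (g : 'M[F]_n) (X Y : 'M[F]_(m, n)) :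
  g *m (X^T *m Y) *m g^T = (X *m g^T)^T *m (Y *m g^T).
Proof. by rewrite trmx_mul trmxK !mulmxA. Qed.

Definition clearing_coef n (w : 'rV[F]_n) (j x : 'I_n) : F :=
  if (j < x)%N then - w 0 x / w 0 j else 0.

Lemma clearing_coef_le n (w : 'rV[F]_n) (j x : 'I_n) :
  (x <= j)%N -> clearing_coef w j x = 0.
Proof. by rewrite /clearing_coef ltnNge => ->. Qed.

Lemma transvection_clear n (w : 'rV[F]_n) (j : 'I_n) :
  w 0 j != 0 -> (forall x : 'I_n, (x < j)%N -> w 0 x = 0) ->
  w *m (transvection j (clearing_coef w j))^T = w 0 j *: delta_mx 0 j.
Proof.
move=> wj w0; apply/rowP => x.
rewrite transvection_tr_row !mxE eqxx /clearing_coef /=.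
rewrite mulr_natr; case: (eqVneq x j) => [->|xj]; first by rewrite ltnn mul0r addr0.
rewrite mulr0n; case: (ltngtP x j) => xj'; first by rewrite w0 // mul0r addr0.
  by rewrite divfK // addrN.
by case/eqP: xj; apply: val_inj.
Qed.

Lemma alternating_rank2_normal_form M :
  alternating M -> (forall e, subpfaff M e = 0) -> M != 0 ->
  exists (a b : 'I_5) (g : 'M[F]_5), [/\ (a < b)%N, M a b != 0, unipotent_lower g,
    polar_null_stable g & g *m M *m g^T = M a b *: wedge_mx a b].
Proof.
move=> hM M0 /(lex_first_nonzero hM)[a [b [ab Mab rowa0 rowab0]]].
have sk := alternating_skew hM.
have ab' : (a == b) = false by apply/negbTE; rewrite neq_ltn ab.
set w := row a M; set u := row b M.
pose g := transvection a (clearing_coef u a) *m transvection b (clearing_coef w b).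
have wg : w *m g^T = M a b *: delta_mx 0 b.
  rewrite trmx_mul mulmxA transvection_clear ?mxE //; last first.
    by move=> x /rowab0; rewrite mxE.
  by rewrite transvection_tr_fix // !mxE ab' andbF mulr0.
have ug : u *m g^T = - M a b *: delta_mx 0 a.
  have ua : u 0 a = - M a b by rewrite mxE sk.
  rewrite trmx_mul mulmxA (@transvection_tr_fix _ b _ u); last by rewrite mxE (proj1 hM).
  rewrite transvection_clear; first by rewrite ua.
    by rewrite ua oppr_eq0.
  by move=> x xa; rewrite mxE sk rowa0 ?oppr0.
exists a, b, g; split => //.
- by apply: unipotent_lower_mul; apply: transvection_lower => x; exact: clearing_coef_le.
- by apply: polar_null_stable_mul; apply: polar_null_stable_transvection;
    rewrite clearing_coef_le.
rewrite {1}(rank2_factor hM M0 Mab) -/w -/u -scalemxAr -scalemxAl mulmxBr mulmxBl.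
rewrite !congr_outer wg ug; apply/matrixP => x y; rewrite !mxE !big_ord1 !mxE /=.
by rewrite -!mulnb !natrM; field.
Qed.

Lemma pfaff_polar_wedge (c : F) (N : 'I_5 -> 'I_5 -> F) (a b x y : 'I_5) :
  uniq [:: a; b; x; y] -> pfaff_polar (c *: wedge_mx a b) N a b x y = c * N x y.
Proof.
rewrite /= !inE !negb_or => /and3P[/and3P[ab ax ay] /andP[bx bY] _].
rewrite /pfaff_polar !mxE !eqxx !(eq_sym x) !(eq_sym y) (eq_sym b a).
by rewrite (negbTE ab) (negbTE ax) (negbTE ay) (negbTE bx) (negbTE bY) /=; ring.
Qed.

Lemma polar_null_wedge (c : F) (a b : 'I_5) N :
  c != 0 -> alternating N -> polar_null (c *: wedge_mx a b) N ->
  forall x y, uniq [:: a; b; x; y] -> N x y = 0.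
Proof.
move=> c0 hN MN0 x y U.
have := pfaff_polar_eq0 (alternating_wedge_mx c a b) hN MN0 U.
by rewrite pfaff_polar_wedge // => /eqP; rewrite mulf_eq0 (negbTE c0) => /eqP.
Qed.

End RankTwo.

Arguments wedge_mx {F n}.

(** * Normal form of three linear forms *)

Section TwoAndThreeVectors.
Variables (F : fieldType) (V : lmodType F).
Implicit Types u v w : V.

Definition indep2 u v := forall a b : F, a *: u + b *: v = 0 -> a = 0 /\ b = 0.

Lemma indep2Nl u v : indep2 u v -> indep2 (- u) v.
Proof.
move=> uv a b; rewrite scalerN -scaleNr => /uv[/eqP + ->].
by rewrite oppr_eq0 => /eqP.
Qed.

Lemma indep2Nr u v : indep2 u v -> indep2 u (- v).
Proof.
move=> uv a b; rewrite scalerN -scaleNr => /uv[-> /eqP].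
by rewrite oppr_eq0 => /eqP.
Qed.

Lemma indep2_or_relation u v :
  indep2 u v \/ exists a b : F, a *: u + b *: v = 0 /\ (a != 0 \/ b != 0).
Proof.
case: (classic (indep2 u v)) => [|nuv]; [by left | right].
apply: NNPP => nrel; apply: nuv => a b ab0.
case: (eqVneq a 0) => [a0|a0]; last by case: nrel; exists a, b; split=> //; left.
case: (eqVneq b 0) => [b0|b0]; last by case: nrel; exists a, b; split=> //; right.
by [].
Qed.

Lemma relation_coef_neq0 u v (a b : F) :
  a *: u + b *: v = 0 -> a != 0 \/ b != 0 -> u != 0 -> b != 0.
Proof.
move=> uv0 nz u0; apply/eqP => b0; move: uv0 nz; rewrite b0 scale0r addr0.
by move/eqP; rewrite scaler_eq0 (negbTE u0) orbF => /eqP ->; rewrite eqxx; case.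
Qed.

Lemma relation_solve u v (a b : F) : b != 0 -> a *: u + b *: v = 0 -> v + (a / b) *: u = 0.
Proof.
move=> b0 uv0; apply: (scalerI b0).
by rewrite scalerDr scalerA (mulrC b) divfK // addrC uv0 scaler0.
Qed.

Lemma relation_solve3 u v w (a b c : F) : c != 0 ->
  a *: u + b *: v + c *: w = 0 -> w + (b / c) *: v + (a / c) *: u = 0.
Proof.
move=> c0 uvw0; apply: (scalerI c0).
rewrite scaler0 -uvw0 !scalerDr !scalerA !(mulrC c) !divfK //.
by rewrite addrC [c *: w + _]addrC addrA.
Qed.

Definition reduced_triple u v w :=
  [\/ u = 0 /\ v = 0, u = 0 /\ w = 0, v = 0 /\ w = 0 |
      [\/ u = 0 /\ indep2 v w, v = 0 /\ indep2 u w | w = 0 /\ indep2 u v]].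

(* The substitution [u2 += t u1, u3 += r u2 + (r t - s) u1] is what the
   unipotent congruence [block3_mx] below does to the entries [xy, xz, yz]. *)
Lemma three_vectors_reduction u1 u2 u3 (l1 l2 l3 : F) :
  l1 *: u1 + l2 *: u2 + l3 *: u3 = 0 -> ~~ [&& l1 == 0, l2 == 0 & l3 == 0] ->
  exists r s t : F,
    reduced_triple u1 (u2 + t *: u1) (u3 + r *: u2 + (r * t - s) *: u1).
Proof.
move=> rel nz; case: (eqVneq u1 0) => [->|u1n0].
  have [i23|[a [b [ab nab]]]] := indep2_or_relation u2 u3.
    by exists 0, 0, 0; rewrite !scaler0 !scale0r !addr0; constructor 4; constructor 1.
  case: (eqVneq u2 0) => [u20|u2n0].
    by exists 0, 0, 0; rewrite u20 !scaler0 !addr0; constructor 1.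
  have b0 := relation_coef_neq0 ab nab u2n0.
  by exists (a / b), 0, 0; rewrite !scaler0 !addr0 (relation_solve b0 ab); constructor 2.
have [i12|[a [b [ab nab]]]] := indep2_or_relation u1 u2.
  have l3n0 : l3 != 0.
    apply: contra nz => /eqP l30; move: rel; rewrite l30 scale0r addr0.
    by case/i12 => -> ->; rewrite !eqxx.
  exists (l2 / l3), (- (l1 / l3)), 0; constructor 4; constructor 3.
  by rewrite mulr0 sub0r opprK scale0r addr0 (relation_solve3 l3n0 rel).
have b0 := relation_coef_neq0 ab nab u1n0.
have [i13|[c [d [cd ncd]]]] := indep2_or_relation u1 u3.
  exists 0, 0, (a / b); constructor 4; constructor 2.
  by rewrite (relation_solve b0 ab) mul0r subrr !scale0r !addr0.
have d0 := relation_coef_neq0 cd ncd u1n0.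
exists 0, (- (c / d)), (a / b); constructor 3.
by rewrite (relation_solve b0 ab) mul0r sub0r opprK scale0r addr0 (relation_solve d0 cd).
Qed.

End TwoAndThreeVectors.

Section BlockThree.
Variable F : fieldType.

Definition block3_mx (x y z : 'I_5) (r s t : F) : 'M[F]_5 :=
  transvection x (fun u => (u == y)%:R * r + (u == z)%:R * s) *m
  transvection y (fun u => (u == z)%:R * t).

Lemma block3_mx_lower (x y z : 'I_5) r s t :
  (x < y)%N -> (y < z)%N -> unipotent_lower (block3_mx x y z r s t).
Proof.
move=> xy yz; have lt_neq (u v : 'I_5) : (u < v)%N -> (u == v) = false.
  by move=> uv; apply/negbTE; rewrite neq_ltn uv.
apply: unipotent_lower_mul; apply: transvection_lower => u ux.
  by rewrite !lt_neq ?mul0r ?addr0 // (leq_ltn_trans ux) // (ltn_trans xy).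
by rewrite lt_neq ?mul0r // (leq_ltn_trans ux).
Qed.

Lemma block3_congrE (x y z : 'I_5) r s t (X : 'M[F]_5) :
  x != y -> x != z -> y != z -> alternating X ->
  let Y := block3_mx x y z r s t *m X *m (block3_mx x y z r s t)^T in
  [/\ Y x y = X x y, Y x z = X x z + t * X x y &
      Y y z = X y z + r * X x z + (r * t - s) * X x y].
Proof.
move=> xy xz yz hX /=; have [X0 _] := hX; have sk := alternating_skew hX.
rewrite /block3_mx congr_mulmx !transvection_congrE !eqxx.
rewrite (eq_sym z y) (negbTE xy) (negbTE xz) (negbTE yz) !X0.
rewrite ?(sk x y) ?(sk x z) ?(sk y z) /=.
by split; ring.
Qed.

Lemma block3_congr_fix (x y z : 'I_5) r s t (X : 'M[F]_5) : alternating X ->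
  (forall v, X x v = 0 /\ X y v = 0) ->
  block3_mx x y z r s t *m X *m (block3_mx x y z r s t)^T = X.
Proof.
move=> hX X0; have sk := alternating_skew hX.
have Xx v : X x v = 0 by case: (X0 v).
have Xy v : X y v = 0 by case: (X0 v).
have xX v : X v x = 0 by rewrite sk Xx oppr0.
have yX v : X v y = 0 by rewrite sk Xy oppr0.
apply/matrixP => u v; rewrite /block3_mx congr_mulmx !transvection_congrE.
by rewrite !(Xx, Xy, xX, yX); ring.
Qed.

Lemma block3_wedge (c : F) (a b x y z : 'I_5) r s t :
  uniq [:: a; b; x; y; z] ->
  let W := c *: wedge_mx a b in let h := block3_mx x y z r s t in
  h *m W *m h^T = W /\ forall u v, u \in [:: x; y; z] -> W v u = 0.
Proof.
move=> U W h; have out u : u \in [:: x; y; z] -> u \notin [:: a; b].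
  move: U; rewrite -[[:: a; b; x; y; z]]/([:: a; b] ++ [:: x; y; z]) cat_uniq.
  by case/and3P => _ /hasPn xyz _; apply: xyz.
have W0 u v : u \in [:: x; y; z] -> W u v = 0 /\ W v u = 0.
  by move=> /out; rewrite /W; apply: wedge_mx_out.
split; last by move=> u v /(W0 _ v)[].
apply: block3_congr_fix; first exact: alternating_wedge_mx.
by move=> v; split; apply: (proj1 (W0 _ v _)); rewrite !inE eqxx ?orbT.
Qed.

Definition entry_row (B : quad F) (i j : 'I_5) : 'rV[F]_4 := \row_k B k i j.

(* The alternatives (i) and (ii) of case (B), on coefficient vectors of the
   linear forms [B(x)_ij]. *)
Definition vanishing_pattern (B : quad F) (I J L : 'I_5) :=
  (entry_row B I L = 0 /\ entry_row B J L = 0) \/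
  (entry_row B I J = 0 /\ indep2 (entry_row B I L) (entry_row B J L)).

Lemma entry_row_skew (B : quad F) (i j : 'I_5) :
  (forall k, alternating (B k)) -> entry_row B j i = - entry_row B i j.
Proof. by move=> hB; apply/rowP => k; rewrite !mxE (alternating_skew (hB k)). Qed.

Lemma reduced_triple_pattern (B : quad F) (x y z : 'I_5) :
  (forall k, alternating (B k)) ->
  reduced_triple (entry_row B x y) (entry_row B x z) (entry_row B y z) ->
  exists I J L : 'I_5, perm_eq [:: I; J; L] [:: x; y; z] /\ vanishing_pattern B I J L.
Proof.
move=> hB; have sk i j := entry_row_skew i j hB.
have pyzx : perm_eq [:: y; z; x] [:: x; y; z] by rewrite (perm_rot 1 [:: x; y; z]).
have pxzy : perm_eq [:: x; z; y] [:: x; y; z] by rewrite perm_cons (perm_rot 1 [:: y; z]).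
case=> [[u0 v0]|[u0 w0]|[v0 w0]|[[u0 i23]|[v0 i13]|[w0 i12]]].
- by exists y, z, x; split=> //; left; rewrite !(sk x) u0 v0 oppr0.
- by exists x, z, y; split=> //; left; rewrite (sk y z) u0 w0 oppr0.
- by exists x, y, z; split=> //; left.
- by exists x, y, z; split=> //; right.
- by exists x, z, y; split=> //; right; rewrite (sk y z); split=> //; apply: indep2Nr.
- exists y, z, x; split=> //; right; rewrite !(sk x); split=> //.
  exact/indep2Nl/indep2Nr.
Qed.

Lemma entry_row_block3 (X : quad F) (x y z : 'I_5) r s t :
  x != y -> x != z -> y != z -> (forall k, alternating (X k)) ->
  let Y k := block3_mx x y z r s t *m X k *m (block3_mx x y z r s t)^T in
  [/\ entry_row Y x y = entry_row X x y,
      entry_row Y x z = entry_row X x z + t *: entry_row X x y &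
      entry_row Y y z =
        entry_row X y z + r *: entry_row X x z + (r * t - s) *: entry_row X x y].
Proof.
move=> xy xz yz hX; split; apply/rowP => k; rewrite [LHS]mxE;
  by case: (block3_congrE r s t xy xz yz (hX k)) => e1 e2 e3; rewrite ?e1 ?e2 ?e3 !mxE.
Qed.

Lemma vanishing_pattern_ext (B B' : quad F) (I J L : 'I_5) :
  B =1 B' -> vanishing_pattern B I J L -> vanishing_pattern B' I J L.
Proof.
move=> eB; have e i j : entry_row B i j = entry_row B' i j.
  by apply/rowP => k; rewrite !mxE eB.
by rewrite /vanishing_pattern !e.
Qed.

Lemma block3_reduction (X : quad F) (x y z : 'I_5) (l1 l2 l3 : F) :
  (x < y)%N -> (y < z)%N -> (forall k, alternating (X k)) ->
  l1 *: entry_row X x y + l2 *: entry_row X x z + l3 *: entry_row X y z = 0 ->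
  ~~ [&& l1 == 0, l2 == 0 & l3 == 0] ->
  exists (r s t : F) (I J L : 'I_5), perm_eq [:: I; J; L] [:: x; y; z] /\
    vanishing_pattern
      (fun k => block3_mx x y z r s t *m X k *m (block3_mx x y z r s t)^T) I J L.
Proof.
move=> xy yz hX rel nz; have [r [s [t red]]] := three_vectors_reduction rel nz.
have ne_lt (u v : 'I_5) : (u < v)%N -> u != v by move=> uv; rewrite neq_ltn uv.
have xz := ltn_trans xy yz.
have [Exy Exz Eyz] := entry_row_block3 r s t (ne_lt _ _ xy) (ne_lt _ _ xz) (ne_lt _ _ yz) hX.
set Y := (fun k => _) in Exy Exz Eyz.
have hY k : alternating (Y k) by exact: alternating_congr.
have := @reduced_triple_pattern Y x y z hY; rewrite Exy Exz Eyz.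
by case/(_ red) => I [J [L pat]]; exists r, s, t, I, J, L.
Qed.

End BlockThree.

(** * Pencils, Jacobian and the tangent space *)

Section Pencils.
Variable F : fieldType.
Implicit Types A B : quad F.

Definition pencil A (v : 'I_4 -> F) : 'M[F]_5 := \sum_k v k *: A k.

Lemma pencil_alternating A v :
  (forall k, alternating (A k)) -> alternating (pencil A v).
Proof.
move=> hA; apply: alternatingP => [u|u w]; rewrite !summxE.
  by apply: big1 => k _; rewrite mxE (proj1 (hA k)) mulr0.
by rewrite -sumrN; apply: eq_bigr => k _; rewrite !mxE (alternating_skew (hA k) u w) mulrN.
Qed.

Lemma meval_linform A p i j : (linform A i j).@[p] = pencil A p i j.
Proof.
rewrite /linform /pencil raddf_sum summxE; apply: eq_bigr => k _.
by rewrite /= mevalZ mevalXU mxE mulrC.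
Qed.

Lemma mderiv_linform A k i j : mderiv k (linform A i j) = (A k i j)%:MP.
Proof.
rewrite /linform raddf_sum (bigD1 k) //= big1 => [|l lk].
  rewrite mderivZ mderivX mnm1E eqxx.
  have -> : (U_(k) - U_(k))%MM = 0%MM :> 'X_{1..4} by apply/mnmP => l; rewrite !mnmE subnn.
  by rewrite mpolyX0 addr0 scale1r -alg_mpolyC.
by rewrite linearZ /= mderivX mnm1E (negbTE lk) scale0r scaler0.
Qed.

Lemma meval_subpf A p i : (subpf A i).@[p] = subpfaff (pencil A p) i.
Proof. by rewrite /subpf /pf4 mevalD mevalB !mevalM !meval_linform. Qed.

Lemma jacE A p i k : jac A p i k = subpfaff_polar (pencil A p) (A k) i.
Proof.
rewrite /jac mxE /subpf /pf4 mderivD mderivB !mderivM !mderiv_linform.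
rewrite mevalD mevalB !mevalD !mevalM !mevalC !meval_linform.
by rewrite /subpfaff_polar /pfaff_polar; ring.
Qed.

Lemma tangent_dim_rank A p : (1 <= tangent_dim A p)%N -> (\rank (jac A p) <= 2)%N.
Proof. by rewrite /tangent_dim; case: (\rank (jac A p)) => [|[|[|[|n]]]]. Qed.

Lemma subpfaff_polar_pencil (M : 'M[F]_5) A v e :
  subpfaff_polar M (pencil A v) e = \sum_l v l * subpfaff_polar M (A l) e.
Proof.
rewrite /pencil (big_morph (fun N : 'M[F]_5 => subpfaff_polar M N e) (id1 := 0) (op1 := +%R)).
- by apply: eq_bigr => l _; rewrite /subpfaff_polar /pfaff_polar !mxE; ring.
- by move=> N1 N2; rewrite /subpfaff_polar /pfaff_polar !mxE; ring.
- by rewrite /subpfaff_polar /pfaff_polar !mxE; ring.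
Qed.

Lemma congr_pencilE A v (g : 'M[F]_5) u w :
  (g *m pencil A v *m g^T) u w = \sum_l v l * (g *m A l *m g^T) u w.
Proof.
rewrite /pencil mulmx_sumr mulmx_suml summxE; apply: eq_bigr => l _.
by rewrite -scalemxAr -scalemxAl mxE.
Qed.

Lemma act_mul (g4 : 'M[F]_4) (h g : 'M[F]_5) A k :
  act g4 (h *m g) A k = h *m act g4 g A k *m h^T.
Proof. by rewrite /act trmx_mul !mulmxA. Qed.

Lemma entry_row_act (g4 : 'M[F]_4) (g : 'M[F]_5) A i j :
  entry_row (act g4 g A) i j = entry_row (fun l => g *m A l *m g^T) i j *m g4^T.
Proof.
apply/rowP => k; rewrite [LHS]mxE (congr_pencilE A (g4 k)) mxE; apply: eq_bigr => l _.
by rewrite !mxE mulrC.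
Qed.

Lemma unipotent_lower1 n : unipotent_lower (1%:M : 'M[F]_n).
Proof.
split=> [u v uv|u]; rewrite mxE ?eqxx //.
by rewrite (_ : u == v = false) //; apply/negbTE; rewrite neq_ltn uv.
Qed.

(* Row [K] of [g4] is [p / p K] for the last [K] with [p K != 0], which makes
   [g4] lower unipotent. *)
Lemma act_last_row A (p : 'I_4 -> F) : (exists k, p k != 0) ->
  exists (K : 'I_4) (g4 : 'M[F]_4), unipotent_lower g4 /\
    forall g5, act g4 g5 A K = (p K)^-1 *: (g5 *m pencil A p *m g5^T).
Proof.
case=> k0 pk0; case: (@arg_maxnP _ k0 (fun k => p k != 0) val pk0) => K pK Kmax.
have pz (l : 'I_4) : (K < l)%N -> p l = 0.
  by move=> Kl; apply/eqP; apply: contraTT Kl => /Kmax; rewrite -leqNgt.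
pose g4 : 'M[F]_4 := \matrix_(k, l) if k == K then p l / p K else (k == l)%:R.
exists K, g4; split.
  split=> [k l kl|k]; rewrite mxE; last by case: eqP => [->|_]; rewrite ?divff ?eqxx.
  case: eqP => [kK|_]; first by rewrite pz ?mul0r // -kK.
  by rewrite (_ : k == l = false) //; apply/negbTE; rewrite neq_ltn kl.
move=> g5; rewrite /act scalemxAl scalemxAr /pencil scaler_sumr.
congr (_ *m _ *m _); apply: eq_bigr => l _.
by rewrite mxE eqxx scalerA mulrC.
Qed.

Lemma linform_eq0 B i j : entry_row B i j = 0 -> linform B i j = 0.
Proof.
move=> /rowP B0; rewrite /linform big1 // => k _.
by have := B0 k; rewrite !mxE => ->; rewrite scale0r.
Qed.

Lemma linform_indep2 B i j i' j' :
  indep2 (entry_row B i j) (entry_row B i' j') ->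
  forall a b : F, a *: linform B i j + b *: linform B i' j' = 0 -> a = 0 /\ b = 0.
Proof.
move=> ind a b ab0; apply: ind; apply/rowP => k; rewrite !mxE.
have /(congr1 (mcoeff U_(k))) := ab0.
rewrite mcoeffD !mcoeffZ /linform !raddf_sum mcoeff0 => <-.
have coefE (i1 j1 : 'I_5) : B k i1 j1 = \sum_l mcoeff U_(k) (B l i1 j1 *: 'X_l).
  rewrite (bigD1 k) //= big1 ?addr0 => [|l lk]; first by rewrite mcoeffZ mcoeffXU eqxx mulr1.
  by rewrite mcoeffZ mcoeffXU (negbTE lk) mulr0.
by rewrite -!coefE.
Qed.

Lemma quad_normal_form B (K : 'I_4) (I J L : 'I_5) :
  uniq [:: I; J; L] -> (forall r, [/\ B K r I = 0, B K r J = 0 & B K r L = 0]) ->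
  vanishing_pattern B I J L ->
  exists (K' : 'I_4) (I' J' L' : 'I_5), [/\ I' != J', I' != L' & J' != L'] /\
    (B K' = 0 \/
     [/\ forall k, B k != 0,
         forall r, [/\ B K' r I' = 0, B K' r J' = 0 & B K' r L' = 0] &
         (linform B I' L' = 0 /\ linform B J' L' = 0) \/
         (linform B I' J' = 0 /\
          forall a b : F, a *: linform B I' L' + b *: linform B J' L' = 0 ->
                          a = 0 /\ b = 0)]).
Proof.
rewrite /= !inE negb_or andbT => /andP[/andP[IJ IL] JL] BK pat.
case: (boolP [exists k, B k == 0]) => [/existsP[k /eqP Bk]|/existsPn Bn0].
  by exists k, I, J, L; split=> //; left.
exists K, I, J, L; split=> //; right; split=> //.
case: pat => [[IL0 JL0]|[IJ0 ind]]; [left | right]; split; try exact: linform_eq0.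
exact: linform_indep2.
Qed.

End Pencils.

Section TangentRelation.
Variable F : fieldType.

Lemma three_rows_dependent k n (J : 'M[F]_(k, n)) (u1 u2 u3 : 'rV[F]_n) :
  (\rank J <= 2)%N ->
  (forall v : 'rV_n, v *m J^T = 0 -> [/\ v *m u1^T = 0, v *m u2^T = 0 & v *m u3^T = 0]) ->
  exists l1 l2 l3 : F,
    ~~ [&& l1 == 0, l2 == 0 & l3 == 0] /\ l1 *: u1 + l2 *: u2 + l3 *: u3 = 0.
Proof.
move=> rJ Ju; pose P : 'M[F]_(1 + (1 + 1), n) := col_mx u1 (col_mx u2 u3).
have sub : (kermx J^T <= kermx P^T)%MS.
  apply/sub_kermxP/row_matrixP => i; rewrite row_mul row0 !tr_col_mx !mul_mx_row.
  have /Ju[-> -> ->] : row i (kermx J^T) *m J^T = 0 by rewrite -row_mul mulmx_ker row0.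
  by rewrite !row_mx0.
have : kermx P != 0.
  rewrite -mxrank_eq0 mxrank_ker subn_eq0 -ltnNge.
  move: (mxrankS sub); rewrite !mxrank_ker !mxrank_tr.
  by have := rank_leq_col P; have := rank_leq_col J; lia.
case/rowV0Pn => l /sub_kermxP; rewrite -[l]hsubmxK -[rsubmx l]hsubmxK.
rewrite !mul_row_col !row_mx_eq0 [lsubmx l]mx11_scalar [lsubmx (rsubmx l)]mx11_scalar.
rewrite [rsubmx (rsubmx l)]mx11_scalar !mul_scalar_mx addrA => rel l0.
exists (lsubmx l 0 0), (lsubmx (rsubmx l) 0 0), (rsubmx (rsubmx l) 0 0); split=> //.
by apply: contra l0 => /and3P[/eqP-> /eqP-> /eqP->]; rewrite !raddf0 eqxx.
Qed.

Lemma tangent_kernel_vanish (A : quad F) p (g : 'M[F]_5) (a b : 'I_5) (c : F) :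
  (forall k, alternating (A k)) -> polar_null_stable g -> c != 0 ->
  g *m pencil A p *m g^T = c *: wedge_mx a b ->
  forall v : 'rV_4, v *m (jac A p)^T = 0 ->
  forall x y, uniq [:: a; b; x; y] ->
    v *m (entry_row (fun l => g *m A l *m g^T) x y)^T = 0.
Proof.
move=> hA gs c0 gPg v vJ x y U.
have hN := alternating_congr g (pencil_alternating (v 0) hA).
have N0 : (g *m pencil A (v 0) *m g^T) x y = 0.
  apply: (polar_null_wedge c0 hN _ U); rewrite -gPg.
  apply: gs; try exact: pencil_alternating.
  move=> e; rewrite subpfaff_polar_pencil; have /rowP/(_ e) := vJ; rewrite !mxE => vJe.
  by rewrite -[RHS]vJe; apply: eq_bigr => l _; rewrite mxE jacE mulrC.
apply/rowP => i; rewrite [LHS]mxE [RHS]mxE -[RHS]N0 congr_pencilE.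
by apply: eq_bigr => l _; rewrite !mxE.
Qed.

Lemma tangent_relation (A : quad F) p (g : 'M[F]_5) (a b x y z : 'I_5) (c : F) :
  (forall k, alternating (A k)) -> polar_null_stable g -> c != 0 ->
  g *m pencil A p *m g^T = c *: wedge_mx a b -> uniq [:: a; b; x; y; z] ->
  (\rank (jac A p) <= 2)%N ->
  let C l := g *m A l *m g^T in
  exists l1 l2 l3 : F, ~~ [&& l1 == 0, l2 == 0 & l3 == 0] /\
    l1 *: entry_row C x y + l2 *: entry_row C x z + l3 *: entry_row C y z = 0.
Proof.
move=> hA gs c0 gPg U rJ C; apply: three_rows_dependent rJ _ => v vJ.
move: U; rewrite /= !inE !negb_or.
move=> /and5P[/and4P[ab ax ay az] /and3P[bx bY bz] /andP[xy xz] yz _].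
have kv := tangent_kernel_vanish hA gs c0 gPg vJ.
by split; apply: kv; rewrite /= !inE !negb_or !(ab, ax, ay, az, bx, bY, bz, xy, xz, yz).
Qed.

End TangentRelation.

Local Open Scope complex_scope.

Theorem lemma4p5 (R : realType) (A : quad R[i])
  (hA : forall k, alternating (A k))
  (p : 'I_4 -> R[i]) (hp : on_scheme A p) (htan : (1 <= tangent_dim A p)%N) :
  exists (g4 : 'M[R[i]]_4) (g5 : 'M[R[i]]_5),
    unipotent_lower g4 /\ unipotent_lower g5 /\
    exists (K : 'I_4) (I J L : 'I_5),
      [/\ I != J, I != L & J != L] /\
      let B := act g4 g5 A in
      (B K = 0 \/
       [/\ forall k, B k != 0,
           forall r, [/\ B K r I = 0, B K r J = 0 & B K r L = 0] &
           (linform B I L = 0 /\ linform B J L = 0) \/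
           (linform B I J = 0 /\
            forall a b : R[i], a *: linform B I L + b *: linform B J L = 0 ->
                               a = 0 /\ b = 0)]).
Proof.
case: hp => p_nz p_on; have hP := pencil_alternating p hA.
have P0 e : subpfaff (pencil A p) e = 0 by rewrite -meval_subpf p_on.
have [K [g4 [g4_low g4E]]] := act_last_row A p_nz.
have [Pz|Pn0] := eqVneq (pencil A p) 0.
  exists g4, 1%:M; do 2 split=> //; first exact: unipotent_lower1.
  by exists K, o0, o1, o2; split=> //; left; rewrite /= g4E Pz mulmx0 mul0mx scaler0.
have [a [b [g [ab Pab g_low g_stab gPg]]]] := alternating_rank2_normal_form hP P0 Pn0.
have [x [y [z [xy yz U]]]] := complement3 ab.
have [l1 [l2 [l3 [nz rel]]]] :=
  tangent_relation hA g_stab Pab gPg U (tangent_dim_rank htan).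
pose X := act g4 g A; have hX k : alternating (X k).
  by rewrite /X /act; apply: alternating_congr; apply: (pencil_alternating (g4 k)).
have relX : l1 *: entry_row X x y + l2 *: entry_row X x z + l3 *: entry_row X y z = 0.
  by rewrite /X !entry_row_act !scalemxAl -!mulmxDl rel mul0mx.
have [r [s [t [I [J [L [IJL pat]]]]]]] := block3_reduction xy yz hX relX nz.
have [fixW colW] := block3_wedge ((p K)^-1 * pencil A p a b) r s t U.
have XK : act g4 g A K = ((p K)^-1 * pencil A p a b) *: wedge_mx a b.
  by rewrite g4E gPg scalerA.
exists g4, (block3_mx x y z r s t *m g); split=> //; split.
  exact: unipotent_lower_mul (block3_mx_lower r s t xy yz) g_low.
apply: (@quad_normal_form _ _ K I J L).
- by rewrite (perm_uniq IJL); case/andP: U => _ /andP[_].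
- move=> w; rewrite act_mul XK fixW.
  by split; apply: colW; rewrite -(perm_mem IJL) !inE eqxx ?orbT.
- by apply: vanishing_pattern_ext pat => k; rewrite act_mul.
Qed.
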